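(* Let $C(x)=\log_2(1+x)$. A device $U_i$ transmits to a machine-type device $M_i$ at fixed rate $R_M>0$ with power $P_{U_i}$, while a device $U_j$ simultaneously transmits to base station $B$ with power $P_{U_j}\in[0,P_U^{Max}]$ and rate $R_{U_j}$. The constraints are: (i) $M_i$ must decode $U_i$ treating $U_j$ as noise, i.e. $P_{U_j}\le P^\ast_{U_j}:=\left(\frac{P_{U_i}|h_{U_i,M_i}|^2}{2^{R_M}-1}-\sigma_M^2\right)\frac{1}{|h_{U_j,M_i}|^2}$; (ii) at $B$, $$R_{U_j}\le\begin{cases}C(\gamma_{U_j,B}) & \text{if } R_M\le C\!\left(\frac{\gamma_{U_i,B}}{1+\gamma_{U_j,B}}\right),\\ C\!\left(\frac{\gamma_{U_j,B}}{1+\gamma_{U_i,B}}\right) & \text{if } R_M> C\!\left(\frac{\gamma_{U_i,B}}{1+\gamma_{U_j,B}}\right).\end{cases}$$ Define $$P^{(1)}_{U_j}=\min\left[P_U^{Max},\ \left(\frac{P_{U_i}|h_{U_i,B}|^2}{2^{R_M}-1}-\sigma_B^2\right)\frac{1}{|h_{U_j,B}|^2},\ P^\ast_{U_j}\right],\qquad P^{(2)}_{U_j}=\min\left[P_U^{Max},\ P^\ast_{U_j}\right],$$ and let $\gamma^{(m)}_{U_j,B}=P^{(m)}_{U_j}|h_{U_j,B}|^2/\sigma_B^2$. Then every rate $R_{U_j,B}$ achievable by $U_j$ under these constraints satisfies $$R_{U_j,B}\le\max\left[C\big(\gamma^{(1)}_{U_j,B}\big),\ C\!\left(\frac{\ga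mma^{(2)}_{U_j,B}}{1+\gamma_{U_i,B}}\right)\right].$$
   Context: $|h_{X,Y}|^2>0$ are instantaneous channel power gains, $\sigma_M^2$ and $\sigma_B^2$ are the noise variances at $M_i$ and $B$, $\gamma_{X,B}=P_X|h_{X,B}|^2/\sigma_B^2$, and $P_U^{Max}$ is the maximal device transmit power. $M_i$ cannot perform interference cancellation, while $B$ receives the signals of $U_i$ and $U_j$ over a Gaussian multiple access channel and may decode and cancel $U_i$'s signal before decoding $U_j$'s. *)

From Stdlib Require Export Reals.
Open Scope R_scope.

Definition Cap (x : R) : R := ln (1 + x) / ln 2.

(* SNR at B: gamma_{X,B} = P_X |h_{X,B}|^2 / sigma_B^2 (g = |h|^2). *)
Definition gammaB (P g sB2 : R) : R := P * g / sB2.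

Definition Pstar (RM PUi gUiMi gUjMi sM2 : R) : R :=
  (PUi * gUiMi / (Rpower 2 RM - 1) - sM2) * / gUjMi.

Definition rate_ok_B (RM PUi PUj gUiB gUjB sB2 RUj : R) : Prop :=
  let gi := gammaB PUi gUiB sB2 in
  let gj := gammaB PUj gUjB sB2 in
  (RM <= Cap (gi / (1 + gj)) -> RUj <= Cap gj) /\
  (RM > Cap (gi / (1 + gj)) -> RUj <= Cap (gj / (1 + gi))).

Definition P1 (RM PUi PMax gUiMi gUjMi gUiB gUjB sM2 sB2 : R) : R :=
  Rmin PMax (Rmin ((PUi * gUiB / (Rpower 2 RM - 1) - sB2) * / gUjB)
                  (Pstar RM PUi gUiMi gUjMi sM2)).

Definition P2 (RM PUi PMax gUiMi gUjMi sM2 : R) : R :=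
  Rmin PMax (Pstar RM PUi gUiMi gUjMi sM2).

(* If U_i's rate R_M is decodable at B while
   treating U_j as noise, B cancels U_i first; unwinding
   R_M <= C(gamma_i / (1 + gamma_j)) bounds P_{U_j} by the SIC threshold, so
   P_{U_j} <= P^(1) and the rate is at most C(gamma^(1)).  Otherwise U_j is
   decoded against U_i as noise, and P_{U_j} <= P^(2) gives the second bound
   by monotonicity of C. *)

From Stdlib Require Import Reals Lra.
Local Open Scope R_scope.

Lemma ln2_pos : 0 < ln 2.
Proof. rewrite <- ln_1; apply ln_increasing; lra. Qed.

Lemma exp_le_mono x y : x <= y -> exp x <= exp y.
Proof.
  intros [Hlt | ->]; [left; exact (exp_increasing _ _ Hlt) | right; reflexivity].
Qed.

Lemma ln_le_mono x y : 0 < x -> x <= y -> ln x <= ln y.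
Proof.
  intros Hx [Hlt | ->]; [left; exact (ln_increasing _ _ Hx Hlt) | right; reflexivity].
Qed.

Lemma Cap_le x y : -1 < x -> x <= y -> Cap x <= Cap y.
Proof.
  intros Hx Hxy; unfold Cap, Rdiv.
  apply Rmult_le_compat_r.
  - left; apply Rinv_0_lt_compat, ln2_pos.
  - apply ln_le_mono; lra.
Qed.

Lemma Rpower2_le_of_le_Cap r z : -1 < z -> r <= Cap z -> Rpower 2 r <= 1 + z.
Proof.
  intros Hz Hr; unfold Rpower.
  rewrite <- (exp_ln (1 + z)) by lra.
  apply exp_le_mono.
  pose proof ln2_pos as Hl.
  unfold Cap in Hr.
  replace (ln (1 + z)) with (ln (1 + z) / ln 2 * ln 2) by (field; lra).
  apply Rmult_le_compat_r; lra.
Qed.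

Lemma Rpower2_gt1 r : 0 < r -> 1 < Rpower 2 r.
Proof.
  intros Hr; rewrite <- (Rpower_O 2) by lra.
  apply Rpower_lt; lra.
Qed.

Lemma gammaB_ge0 P g s : 0 <= P -> 0 < g -> 0 < s -> 0 <= gammaB P g s.
Proof.
  intros HP Hg Hs; unfold gammaB, Rdiv.
  apply Rmult_le_pos; [nra | left; apply Rinv_0_lt_compat; lra].
Qed.

Lemma gammaB_le P P' g s : 0 < g -> 0 < s -> P <= P' -> gammaB P g s <= gammaB P' g s.
Proof.
  intros Hg Hs HP; unfold gammaB, Rdiv.
  apply Rmult_le_compat_r; [left; apply Rinv_0_lt_compat; lra | nra].
Qed.

Lemma div_1plus_ge0 x y : 0 <= x -> 0 <= y -> 0 <= x / (1 + y).
Proof.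
  intros Hx Hy; unfold Rdiv.
  apply Rmult_le_pos; [|left; apply Rinv_0_lt_compat]; lra.
Qed.

Lemma le_div_mult c q d : 0 < d -> c <= q / d -> c * d <= q.
Proof.
  intros Hd H.
  replace q with (q / d * d) by (field; lra).
  apply Rmult_le_compat_r; lra.
Qed.

(* The SIC threshold of P^(1): U_i's SINR at B, with U_j as interference,
   reaches 2^{R_M} - 1. *)
Lemma power_le_SIC_threshold a PUi PUj gUiB gUjB sB2 :
  1 < a -> 0 <= PUj -> 0 < gUjB -> 0 < sB2 ->
  a - 1 <= gammaB PUi gUiB sB2 / (1 + gammaB PUj gUjB sB2) ->
  PUj <= (PUi * gUiB / (a - 1) - sB2) * / gUjB.
Proof.
  intros Ha HP Hg Hs H.
  assert (Hsinr : gammaB PUi gUiB sB2 / (1 + gammaB PUj gUjB sB2)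
                  = PUi * gUiB / (sB2 + PUj * gUjB))
    by (unfold gammaB; field; nra).
  rewrite Hsinr in H.
  apply le_div_mult in H; [|nra].
  assert (Hsum : sB2 + PUj * gUjB <= PUi * gUiB / (a - 1)).
  { unfold Rdiv; replace (sB2 + PUj * gUjB)
      with ((a - 1) * (sB2 + PUj * gUjB) * / (a - 1)) by (field; lra).
    apply Rmult_le_compat_r; [left; apply Rinv_0_lt_compat|]; lra. }
  replace PUj with (PUj * gUjB * / gUjB) by (field; lra).
  apply Rmult_le_compat_r; [left; apply Rinv_0_lt_compat|]; lra.
Qed.

Theorem theorem2
  (RM PUi PMax gUiMi gUjMi gUiB gUjB sM2 sB2 : R)
  (hRM : 0 < RM) (hPUi : 0 <= PUi) (hPMax : 0 <= PMax)
  (h1 : 0 < gUiMi) (h2 : 0 < gUjMi) (h3 : 0 < gUiB) (h4 : 0 < gUjB)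
  (hsM : 0 < sM2) (hsB : 0 < sB2)
  (PUj RUj : R)
  (hP0 : 0 <= PUj) (hPmax : PUj <= PMax)
  (hPstar : PUj <= Pstar RM PUi gUiMi gUjMi sM2)
  (hrate : rate_ok_B RM PUi PUj gUiB gUjB sB2 RUj) :
  (RUj <= Rmax
    (Cap (gammaB (P1 RM PUi PMax gUiMi gUjMi gUiB gUjB sM2 sB2) gUjB sB2))
    (Cap (Rdiv (gammaB (P2 RM PUi PMax gUiMi gUjMi sM2) gUjB sB2)
              (1 + gammaB PUi gUiB sB2))))%R.
Proof.
  destruct hrate as [Hsic Hnosic].
  pose proof (gammaB_ge0 _ _ _ hP0 h4 hsB) as Hgj.
  pose proof (gammaB_ge0 _ _ _ hPUi h3 hsB) as Hgi.
  pose proof (div_1plus_ge0 _ _ Hgi Hgj) as Hsinr_i.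
  pose proof (div_1plus_ge0 _ _ Hgj Hgi) as Hsinr_j.
  destruct (Rle_or_lt RM (Cap (gammaB PUi gUiB sB2 / (1 + gammaB PUj gUjB sB2))))
    as [Hdec | Hnodec].
  - eapply Rle_trans; [exact (Hsic Hdec)|]; eapply Rle_trans; [|apply Rmax_l].
    apply Cap_le; [lra|]; apply gammaB_le; [exact h4 | exact hsB|].
    apply Rmin_glb; [exact hPmax|]; apply Rmin_glb; [|exact hPstar].
    apply Rpower2_le_of_le_Cap in Hdec; [|lra].
    apply power_le_SIC_threshold; [apply Rpower2_gt1 | | | |]; lra.
  - eapply Rle_trans; [exact (Hnosic Hnodec)|]; eapply Rle_trans; [|apply Rmax_r].
    apply Cap_le; [lra|].
    unfold Rdiv; apply Rmult_le_compat_r; [left; apply Rinv_0_lt_compat; lra|].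
    apply gammaB_le; [exact h4 | exact hsB|]; apply Rmin_glb; assumption.
Qed.
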